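(* Let \[D_1=\{t\in[a,b]\cap N_g^-: t\in (D_g\cap[a,t))'\},\quad D_2=\{t\in[a,b]\cap N_g^+: t\in (D_g\cap(t,b])'\},\] \[D_3=\{t\in[a,b]\setminus (N_g\cup D_g): t\in (D_g\cap[a,b])'\},\] and consider the restriction $\Delta g|_{[a,b]}$. For $t\in[a,b]$: 1. If $t^*\in D_1\cup D_2\cup D_3$, then $\Delta g|_{[a,b]}$ is $g$-differentiable at $t$ if and only if $\displaystyle\lim_{s\to t^*,\ s\in D_g}\frac{\Delta g|_{[a,b]}(s)}{g(s)-g(t)}=0$, the limit being the left-hand one if $t^*\in N_g^-$ and the right-hand one if $t^*\in N_g^+$. 2. In any other case, $\Delta g|_{[a,b]}$ is $g$-differentiable at $t$. Furthermore, if $\Delta g|_{[a,b]}$ is $g$-differentiable at $t$, then $(\Delta g|_{[a,b]})'_g(t)=-\chi_{D_g}(t^* )$. In particular, $\Delta g|_{[a,b]}$ is $g$-differentiable on $[a,b]$ with this derivative if $\displaystyle\lim_{s\to t,\ s\in D_g}\frac{\Delta g|_{[a,b]}(s)}{g(s)-g(t)}=0$ for all $t\in D_1\cup D_2\cup D_3$ (with the same convention on one-sided limits).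
   Context: Let $g:\mathbb R\to\mathbb R$ be nondecreasing and left-continuous. $\Delta g(t)=g(t^+)-g(t)$, $D_g=\{t:\Delta g(t)>0\}$, $C_g=\{t: g\text{ constant on }(t-\varepsilon,t+\varepsilon)\text{ for some }\varepsilon>0\}=\bigcup_{n\in\Lambda}(a_n,b_n)$ (disjoint union of connected components), $N_g^-=\{a_n\}\setminus D_g$, $N_g^+=\{b_n\}\setminus D_g$, $N_g=N_g^-\cup N_g^+$. Fix $a<b$ with $a\notin N_g^-$, $b\notin D_g\cup C_g\cup N_g^+$. For $t\in[a,b]$, $t^*=t$ if $t\notin C_g$ and $t^*=b_n$ if $t\in(a_n,b_n)$. The $g$-derivative of $u:[a,b]\to\mathbb R$ at $t$ is $u'_g(t)=\lim_{s\to t}\frac{u(s)-u(t)}{g(s)-g(t)}$ if $t\notin D_g\cup C_g$ and $u'_g(t)=\lim_{s\to t^{*+}}\frac{u(s)-u(t^* )}{g(s)-g(t^* )}$ if $t\in D_g\cup C_g$, provided the finite limit exists; limits are over $s\in[a,b]$ with nonzero denominator, and at points of $N_g^+\cup\{a\}$ only the right-hand limit, at points of $N_g^-\cup\{b\}$ only the left-hand limit is taken. $X'$ is the set of accumulation points of $X$; $\chi_{D_g}$ the indicator of $D_g$. *)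

From Stdlib Require Import Reals.
From Coquelicot Require Import Coquelicot.
Open Scope R_scope.

Definition nondecreasing (g : R -> R) : Prop :=
  forall x y, x <= y -> g x <= g y.
Definition left_continuous (g : R -> R) : Prop :=
  forall t, filterlim g (at_left t) (locally (g t)).

(* g(t^+) : right-hand limit; for nondecreasing g it equals inf_{s>t} g s *)
Definition gplus (g : R -> R) (t : R) : R :=
  real (Glb_Rbar (fun y => exists s, t < s /\ y = g s)).

Definition DeltaG (g : R -> R) (t : R) : R := gplus g t - g t.

Definition Dg (g : R -> R) (t : R) : Prop := DeltaG g t > 0.

Definition Cg (g : R -> R) (t : R) : Prop :=
  exists eps, eps > 0 /\
    forall x y, Rabs (x - t) < eps -> Rabs (y - t) < eps -> g x = g y.

(* (c,d) is a connected component of the open set C_g (c,d possibly infinite) *)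
Definition Cg_component (g : R -> R) (c d : Rbar) : Prop :=
  Rbar_lt c d /\
  (forall x : R, Rbar_lt c x -> Rbar_lt x d -> Cg g x) /\
  (forall r : R, c = Finite r -> ~ Cg g r) /\
  (forall r : R, d = Finite r -> ~ Cg g r).

Definition Ngm (g : R -> R) (t : R) : Prop :=
  (exists d, Cg_component g (Finite t) d) /\ ~ Dg g t.
Definition Ngp (g : R -> R) (t : R) : Prop :=
  (exists c, Cg_component g c (Finite t)) /\ ~ Dg g t.
Definition Ng (g : R -> R) (t : R) : Prop := Ngm g t \/ Ngp g t.

Definition is_tstar (g : R -> R) (t ts : R) : Prop :=
  (~ Cg g t /\ ts = t) \/
  (exists c : Rbar, Cg_component g c (Finite ts) /\ Rbar_lt c t /\ t < ts).

(* u'_g(t) = L (as a relation), for u : [a,b] -> R (only values on [a,b] used). *)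
Definition has_gderiv (g : R -> R) (a b : R) (u : R -> R) (t L : R) : Prop :=
  (~ (Dg g t \/ Cg g t) /\
   filterlim (fun s => (u s - u t) / (g s - g t))
     (within (fun s => a <= s <= b /\ g s <> g t /\
                       ((Ngp g t \/ t = a) -> t < s) /\
                       ((Ngm g t \/ t = b) -> s < t))
             (locally t))
     (locally L))
  \/
  ((Dg g t \/ Cg g t) /\
   exists ts, is_tstar g t ts /\
   filterlim (fun s => (u s - u ts) / (g s - g ts))
     (within (fun s => a <= s <= b /\ ts < s /\ g s <> g ts) (locally ts))
     (locally L)).

Definition g_differentiable (g : R -> R) (a b : R) (u : R -> R) (t : R) : Prop :=
  exists L, has_gderiv g a b u t L.

Definition acc_point (X : R -> Prop) (t : R) : Prop :=
  forall eps, eps > 0 -> exists s, X s /\ s <> t /\ Rabs (s - t) < eps.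

Definition Dset1 (g : R -> R) (a b t : R) : Prop :=
  a <= t <= b /\ Ngm g t /\ acc_point (fun s => Dg g s /\ a <= s < t) t.
Definition Dset2 (g : R -> R) (a b t : R) : Prop :=
  a <= t <= b /\ Ngp g t /\ acc_point (fun s => Dg g s /\ t < s <= b) t.
Definition Dset3 (g : R -> R) (a b t : R) : Prop :=
  a <= t <= b /\ ~ Ng g t /\ ~ Dg g t /\
  acc_point (fun s => Dg g s /\ a <= s <= b) t.

Definition lim_ratio_zero (g : R -> R) (a b t ts : R) : Prop :=
  filterlim (fun s => DeltaG g s / (g s - g t))
    (within (fun s => a <= s <= b /\ Dg g s /\ s <> ts /\
                      (Ngm g ts -> s < ts) /\ (Ngp g ts -> ts < s))
            (locally ts))
    (locally 0).

(* For [p] in [D_g] the quotient (Δg(s) - Δg(p)) / (g(s) - g(p))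
   tends to -1 from the right, since g(s) - g(p) >= Δg(p) while
   Δg(s) + g(s) - g(p^+) <= g(s') - g(p^+) -> 0 for p < s < s'.  For [p] outside
   [D_g] the quotient is Δg(s) / (g(s) - g(p)), which vanishes off [D_g]; the only
   possible limit is 0, because a nondecreasing [g] cannot have jumps >= c at all
   points of an interval (it would increase by n c for every n), so every one-sided
   neighbourhood where [g] leaves [g(p)] contains points with small quotient.
   Whether 0 is attained is then decided on [D_g] alone, and is automatic when [p]
   does not accumulate the relevant jumps, i.e. outside D_1 ∪ D_2 ∪ D_3.  On a
   plateau of [g], [t^*] replaces [t] by the right endpoint, where [g] has the
   same value by left continuity. *)

From Stdlib Require Import Reals Lra Classical.
From Coquelicot Require Import Coquelicot.
Open Scope R_scope.

Definition lim_at (E : R -> Prop) (F : R -> R) (p L : R) : Prop :=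
  forall eps, eps > 0 -> exists del, del > 0 /\
    forall s, E s -> Rabs (s - p) < del -> Rabs (F s - L) < eps.

Lemma filterlim_within_iff_lim_at (E : R -> Prop) (F : R -> R) (p L : R) :
  filterlim F (within E (locally p)) (locally L) <-> lim_at E F p L.
Proof.
  rewrite filterlim_locally. split.
  - intros H eps He. destruct (H (mkposreal eps He)) as [d Hd].
    exists d. split; [apply cond_pos|]. intros s Es Hs. apply Hd; auto.
  - intros H eps. destruct (H eps (cond_pos eps)) as [d [Hd0 Hd]].
    exists (mkposreal d Hd0). intros s Hs Es. apply Hd; auto.
Qed.

Lemma lim_at_ext (E1 E2 : R -> Prop) (F1 F2 : R -> R) (p L : R) :
  (forall s, E2 s -> E1 s) -> (forall s, E2 s -> F1 s = F2 s) ->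
  lim_at E1 F1 p L -> lim_at E2 F2 p L.
Proof.
  intros HE HF H eps He. destruct (H eps He) as [d [Hd H']].
  exists d; split; auto. intros s Es Hs. rewrite <- HF; auto.
Qed.

Definition approached_inside (E : R -> Prop) (a b p : R) : Prop :=
  forall del, del > 0 -> exists s, E s /\ Rabs (s - p) < del /\ a < s < b.

Lemma lim_at_unique (E : R -> Prop) (F : R -> R) (a b p L1 L2 : R) :
  approached_inside E a b p -> lim_at E F p L1 -> lim_at E F p L2 -> L1 = L2.
Proof.
  intros HE H1 H2. apply filterlim_within_iff_lim_at in H1, H2.
  assert (HF : ProperFilter' (within E (locally p))).
  { constructor.
    - intros [d Hd]. destruct (HE d (cond_pos d)) as [s [Es [Hs _]]]. exact (Hd s Hs Es).
    - apply within_filter, locally_filter. }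
  exact (filterlim_locally_unique F L1 L2 H1 H2).
Qed.

Lemma lim_at_eq0_of_frequently_small (E : R -> Prop) (F : R -> R) (p L : R) :
  (forall eps del, eps > 0 -> del > 0 ->
     exists s, E s /\ Rabs (s - p) < del /\ Rabs (F s) < eps) ->
  lim_at E F p L -> L = 0.
Proof.
  intros Hsmall HL. destruct (Req_dec L 0) as [|HL0]; auto. exfalso.
  assert (HLpos : Rabs L > 0) by (apply Rabs_pos_lt; auto).
  destruct (HL (Rabs L / 2)) as [del [Hdel K]]; [lra|].
  destruct (Hsmall (Rabs L / 2) del) as [s [Es [Hs Hsm]]]; [lra|auto|].
  specialize (K s Es Hs).
  pose proof (Rabs_triang_inv L (F s)) as Htri. rewrite Rabs_minus_sym in Htri. lra.
Qed.

Definition isolated (X : R -> Prop) (p : R) : Prop :=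
  exists e, e > 0 /\ forall s, X s -> Rabs (s - p) >= e.

Lemma lim_at_isolated (X : R -> Prop) (F : R -> R) (p L : R) : isolated X p -> lim_at X F p L.
Proof.
  intros [e [He H]] eps Heps. exists e. split; auto.
  intros s Xs Hs. specialize (H s Xs). lra.
Qed.

Lemma not_acc_point_isolated (X Y : R -> Prop) (p : R) :
  ~ acc_point X p -> (forall s, Y s -> X s /\ s <> p) -> isolated Y p.
Proof.
  intros Hacc HYX. apply NNPP. intro Hiso. apply Hacc. intros e He.
  apply NNPP. intro Hfar. apply Hiso. exists e. split; auto.
  intros s Ys. destruct (HYX s Ys) as [Xs Hsp].
  apply Rnot_lt_ge. intro. apply Hfar. exists s. auto.
Qed.

Lemma not_upper_bound_exists (S : R -> Prop) (x : R) :
  ~ is_upper_bound S x -> exists z, S z /\ x < z.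
Proof.
  intro H. apply NNPP. intro Hn. apply H. intros z Sz.
  apply Rnot_lt_le. intro. apply Hn. eauto.
Qed.

Lemma open_interval_extends_right (P : R -> Prop) (p del : R) :
  (forall x, P x -> exists e, e > 0 /\ forall y, Rabs (y - x) < e -> P y) ->
  del > 0 -> (forall x, p < x < p + del -> P x) ->
  exists d : Rbar, Rbar_lt p d /\ (forall x : R, p < x -> Rbar_lt x d -> P x) /\
    (forall r, d = Finite r -> ~ P r).
Proof.
  intros Hopen Hdel Hinit.
  set (S := fun z => p <= z /\ forall x, p < x < z -> P x).
  assert (Hbeyond : forall x, p < x -> (exists z, S z /\ x < z) -> P x).
  { intros x Hx [z [[_ Hz] Hxz]]. apply Hz. lra. }
  destruct (classic (bound S)) as [Hb|Hnb].
  - destruct (completeness S Hb) as [m [Hub Hlub]].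
    { exists p. split; [lra|]. intros; lra. }
    assert (Hbelow : forall x, p < x < m -> P x).
    { intros x Hx. apply Hbeyond; [lra|]. apply not_upper_bound_exists.
      intro Hx'. specialize (Hlub x Hx'). lra. }
    assert (Hpm : p + del <= m) by (apply Hub; split; [lra|exact Hinit]).
    exists (Finite m). split; [simpl; lra|]. split.
    + intros x Hx Hxm. apply Hbelow. simpl in Hxm. lra.
    + intros r [= <-] HPm. destruct (Hopen m HPm) as [e [He Hm]].
      assert (HSme : S (m + e)).
      { split; [lra|]. intros x Hx. destruct (Rlt_le_dec x m).
        - apply Hbelow. lra.
        - apply Hm. apply Rabs_def1; lra. }
      specialize (Hub _ HSme). lra.
  - exists p_infty. split; [exact I|]. split; [|discriminate].
    intros x Hx _. apply Hbeyond; auto. apply not_upper_bound_exists.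
    intro Hx'. apply Hnb. exists x. exact Hx'.
Qed.

Lemma Rbar_lt_opp_l (d : Rbar) (x : R) : Rbar_lt (Rbar_opp d) x <-> Rbar_lt (- x) d.
Proof. destruct d as [d| |]; simpl; split; auto; lra. Qed.

Section DeltaG_gderivative.

Variable g : R -> R.
Hypothesis Hg : nondecreasing g.

Lemma gplus_spec p :
  (forall s, p < s -> gplus g p <= g s) /\ g p <= gplus g p /\
  (forall eps, eps > 0 -> exists s, p < s /\ g s < gplus g p + eps).
Proof.
  unfold gplus.
  set (S := fun y => exists s, p < s /\ y = g s).
  destruct (Glb_Rbar_correct S) as [Hlb Hglb].
  assert (Hlow : Rbar_le (g p) (Glb_Rbar S)).
  { apply Hglb. intros y [s [Hs ->]]. apply Hg. lra. }
  assert (Hup : Rbar_le (Glb_Rbar S) (g (p + 1))).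
  { apply Hlb. exists (p + 1). split; auto; lra. }
  destruct (Glb_Rbar S) as [l| |]; simpl in Hlow, Hup |- *; try contradiction.
  split; [|split; auto].
  - intros s Hs. apply (Hlb (g s)). exists s. auto.
  - intros eps He. apply NNPP. intro Hn.
    assert (Hl : Rbar_le (l + eps) l).
    { apply Hglb. intros y [s [Hs ->]]. simpl.
      apply Rnot_lt_le. intro. apply Hn. exists s. auto. }
    simpl in Hl. lra.
Qed.

Lemma DeltaG_ge0 p : 0 <= DeltaG g p.
Proof. unfold DeltaG. destruct (gplus_spec p) as [_ [H _]]. lra. Qed.

Lemma jump_le p q : p < q -> g p + DeltaG g p <= g q.
Proof.
  intro Hpq. unfold DeltaG. destruct (gplus_spec p) as [H _]. specialize (H q Hpq). lra.
Qed.

Lemma DeltaG_eq0 p : ~ Dg g p -> DeltaG g p = 0.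
Proof. unfold Dg. intros. pose proof (DeltaG_ge0 p). lra. Qed.

(* Induction step: the jump at the midpoint plus the increase of [g] on the left half. *)
Lemma jumps_sum_le c n : forall x y, x < y -> (forall s, x < s < y -> c <= DeltaG g s) ->
  INR n * c <= g y - g x.
Proof.
  induction n as [|n IH]; intros x y Hxy Hc.
  - simpl. pose proof (Hg x y). lra.
  - set (m := (x + y) / 2).
    assert (Hleft := IH x m ltac:(unfold m; lra)
                       ltac:(intros s Hs; apply Hc; unfold m in Hs; lra)).
    assert (Hm := Hc m ltac:(unfold m; lra)).
    assert (Hj := jump_le m y ltac:(unfold m; lra)).
    rewrite S_INR. lra.
Qed.

Lemma exists_small_jump x y c : x < y -> c > 0 -> exists s, x < s < y /\ DeltaG g s < c.
Proof.
  intros Hxy Hc. apply NNPP. intro Hn.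
  destruct (INR_archimed c (g y - g x) Hc) as [n Hn'].
  assert (INR n * c <= g y - g x); [|lra].
  apply jumps_sum_le; auto. intros s Hs.
  apply Rnot_lt_le. intro. apply Hn. exists s. auto.
Qed.


Lemma Dg_not_Cg p : Dg g p -> ~ Cg g p.
Proof.
  intros HD [e [He Hconst]].
  destruct (gplus_spec p) as [Hle _].
  specialize (Hle (p + e / 2) ltac:(lra)).
  rewrite (Hconst (p + e / 2) p) in Hle by (apply Rabs_def1; lra).
  unfold Dg, DeltaG in HD. lra.
Qed.

Lemma gplus_of_right_const p del v : del > 0 ->
  (forall y, p < y < p + del -> g y = v) -> gplus g p = v.
Proof.
  intros Hdel Hconst. destruct (gplus_spec p) as [Hle [_ Happrox]].
  apply Rle_antisym.
  - rewrite <- (Hconst (p + del / 2)) by lra. apply Hle. lra.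
  - apply Rnot_lt_le. intro Hlt.
    destruct (Happrox (v - gplus g p)) as [s [Hs Hgs]]; [lra|].
    set (s' := Rmin s (p + del / 2)).
    assert (s' <= s) by apply Rmin_l. assert (s' <= p + del / 2) by apply Rmin_r.
    assert (p < s') by (apply Rmin_glb_lt; lra).
    pose proof (Hg s' s ltac:(lra)). rewrite Hconst in * by lra. lra.
Qed.

Lemma Cg_locally_const x : Cg g x -> exists e, e > 0 /\ forall y, Rabs (y - x) < e -> g y = g x.
Proof.
  intros [e [He H]]. exists e. split; auto. intros y Hy. apply H; auto.
  rewrite Rminus_eq_0, Rabs_R0. lra.
Qed.

Lemma Cg_open x : Cg g x -> exists e, e > 0 /\ forall y, Rabs (y - x) < e -> Cg g y.
Proof.
  intros [e [He H]]. exists (e / 2). split; [lra|]. intros y Hy.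
  exists (e / 2). split; [lra|]. apply Rabs_def2 in Hy.
  intros u v Hu Hv. apply Rabs_def2 in Hu, Hv. apply H; apply Rabs_def1; lra.
Qed.

Lemma Cg_of_const_between x y v : (forall z, x < z < y -> g z = v) ->
  forall z, x < z < y -> Cg g z.
Proof.
  intros Hconst z Hz. exists (Rmin (z - x) (y - z)). split; [apply Rmin_pos; lra|].
  assert (Rmin (z - x) (y - z) <= z - x) by apply Rmin_l.
  assert (Rmin (z - x) (y - z) <= y - z) by apply Rmin_r.
  intros u w Hu Hw. apply Rabs_def2 in Hu, Hw. rewrite !Hconst by lra. reflexivity.
Qed.

Lemma Cg_interval_const x y : x <= y -> (forall z, x <= z <= y -> Cg g z) -> g y = g x.
Proof.
  intros [Hxy| ->] HC; [|reflexivity]. symmetry. apply (eq_is_derive g); auto.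
  intros z Hz. destruct (Cg_locally_const z (HC z Hz)) as [e [He Hz']].
  apply (is_derive_ext_loc (fun _ => g z)); [|apply is_derive_const].
  exists (mkposreal e He). intros u Hu. symmetry. exact (Hz' u Hu).
Qed.

Lemma Cg_component_of_right_const p del : ~ Cg g p -> del > 0 ->
  (forall y, p < y < p + del -> g y = g p) -> exists d, Cg_component g (Finite p) d.
Proof.
  intros HnC Hdel Hconst.
  destruct (open_interval_extends_right (Cg g) p del Cg_open Hdel
              (Cg_of_const_between p (p + del) (g p) Hconst)) as [d [Hpd [Hin Hend]]].
  exists d. split; [exact Hpd|]. split; [exact Hin|]. split; [|exact Hend].
  intros r [= <-]. exact HnC.
Qed.

(* Reflection [x |-> -x] reduces this to [open_interval_extends_right]. *)
Lemma Cg_component_of_left_const p del : ~ Cg g p -> del > 0 ->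
  (forall y, p - del < y < p -> g y = g p) -> exists c, Cg_component g c (Finite p).
Proof.
  intros HnC Hdel Hconst.
  assert (Hopen : forall x, Cg g (- x) ->
            exists e, e > 0 /\ forall y, Rabs (y - x) < e -> Cg g (- y)).
  { intros x Hx. destruct (Cg_open (- x) Hx) as [e [He H]]. exists e. split; auto.
    intros y Hy. apply H. rewrite <- Rabs_Ropp. replace (- (- y - - x)) with (y - x) by ring.
    exact Hy. }
  assert (Hinit : forall x, - p < x < - p + del -> Cg g (- x)).
  { intros x Hx. apply (Cg_of_const_between (p - del) p (g p) Hconst). lra. }
  destruct (open_interval_extends_right (fun x => Cg g (- x)) (- p) del Hopen Hdel Hinit)
    as [d [Hpd [Hin Hend]]].
  exists (Rbar_opp d). split; [|split; [|split]].
  - apply Rbar_lt_opp_l. exact Hpd.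
  - intros x Hdx Hxp. rewrite <- (Ropp_involutive x). apply Hin; [simpl in Hxp; lra|].
    apply Rbar_lt_opp_l. exact Hdx.
  - intros r Hr. rewrite <- (Ropp_involutive r). apply Hend.
    rewrite <- (Rbar_opp_involutive d), Hr. simpl. reflexivity.
  - intros r [= <-]. exact HnC.
Qed.

Hypothesis Hl : left_continuous g.

Lemma Cg_component_const_left c p : Cg_component g c (Finite p) ->
  forall x : R, Rbar_lt c x -> x <= p -> g x = g p.
Proof.
  intros [_ [Hin _]] x Hcx [Hxp| ->]; [|reflexivity].
  assert (Hconst : forall y, x <= y < p -> g y = g x).
  { intros y Hy. apply Cg_interval_const; [lra|]. intros z Hz. apply Hin; simpl; [|lra].
    apply (Rbar_lt_le_trans _ x); simpl; [exact Hcx|lra]. }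
  symmetry. apply (filterlim_locally_unique (F := at_left p) g); [apply Hl|].
  apply (filterlim_ext_loc (fun _ => g x)); [|apply filterlim_const].
  exists (mkposreal (p - x) ltac:(lra)). intros y Hy Hyp.
  change (Rabs (y - p) < p - x) in Hy. apply Rabs_def2 in Hy. symmetry. apply Hconst. lra.
Qed.

Lemma Cg_component_const_right p d : Cg_component g (Finite p) d -> ~ Dg g p ->
  exists del, del > 0 /\ forall y, p <= y < p + del -> g y = g p.
Proof.
  intros [Hpd [Hin _]] HnD.
  assert (Hx1 : exists x1 : R, p < x1 /\ Rbar_lt x1 d).
  { destruct d as [d| |]; simpl in Hpd |- *; try contradiction.
    - exists ((p + d) / 2). lra.
    - exists (p + 1). split; [lra|exact I]. }
  destruct Hx1 as [x1 [Hpx1 Hx1d]].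
  assert (Hconst : forall y, p < y < x1 -> g y = g x1).
  { intros y Hy. symmetry. apply Cg_interval_const; [lra|]. intros z Hz. apply Hin; [simpl; lra|].
    apply (Rbar_le_lt_trans _ x1); [simpl; lra|exact Hx1d]. }
  assert (Hgp : g p = g x1).
  { assert (Hplus : gplus g p = g x1).
    { apply (gplus_of_right_const p (x1 - p)); [lra|]. intros y Hy. apply Hconst. lra. }
    pose proof (DeltaG_eq0 p HnD). unfold DeltaG in *. lra. }
  exists (x1 - p). split; [lra|]. intros y [[Hpy| <-] Hy]; [|reflexivity].
  rewrite Hgp. apply Hconst. lra.
Qed.

Lemma Ngm_Ngp_disjoint p : Ngm g p -> ~ Ngp g p.
Proof.
  intros [[d Hd] HnD] [[c Hc] _].
  destruct (Cg_component_const_right p d Hd HnD) as [d2 [Hd2 Hright]].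
  pose proof Hc as [Hcp [_ [_ Hend]]]. apply (Hend p eq_refl).
  assert (Hx0 : exists x0 : R, Rbar_lt c x0 /\ x0 < p).
  { destruct c as [c| |]; simpl in Hcp |- *; try contradiction.
    - exists ((c + p) / 2). lra.
    - exists (p - 1). split; [exact I|lra]. }
  destruct Hx0 as [x0 [Hcx0 Hx0p]].
  exists (Rmin (p - x0) d2). split; [apply Rmin_pos; lra|].
  assert (Rmin (p - x0) d2 <= p - x0) by apply Rmin_l. assert (Rmin (p - x0) d2 <= d2) by apply Rmin_r.
  assert (Hnear : forall y, Rabs (y - p) < Rmin (p - x0) d2 -> g y = g p).
  { intros y Hy. apply Rabs_def2 in Hy. destruct (Rle_lt_dec y p).
    - apply (Cg_component_const_left c p Hc); [|lra]. apply (Rbar_lt_le_trans _ x0); simpl; [exact Hcx0|lra].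
    - apply Hright. lra. }
  intros u v Hu Hv. rewrite (Hnear u Hu), (Hnear v Hv). reflexivity.
Qed.

Lemma g_lt_right p s : ~ Cg g p -> ~ Ngm g p -> p < s -> g p < g s.
Proof.
  intros HnC HnM Hps. destruct (classic (Dg g p)) as [HD|HnD].
  - pose proof (jump_le p s Hps). unfold Dg in HD. lra.
  - destruct (Hg p s ltac:(lra)) as [|Heq]; auto. exfalso. apply HnM. split; auto.
    apply (Cg_component_of_right_const p (s - p)); [auto|lra|].
    intros y Hy. apply Rle_antisym; [rewrite Heq|]; apply Hg; lra.
Qed.

Lemma g_lt_left p s : ~ Cg g p -> ~ Dg g p -> ~ Ngp g p -> s < p -> g s < g p.
Proof.
  intros HnC HnD HnP Hsp. destruct (Hg s p ltac:(lra)) as [|Heq]; auto. exfalso.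
  apply HnP. split; auto.
  apply (Cg_component_of_left_const p (p - s)); [auto|lra|].
  intros y Hy. apply Rle_antisym; [|rewrite <- Heq]; apply Hg; lra.
Qed.

Lemma tstar_not_Cg t ts : ~ Cg g t -> is_tstar g t ts -> ts = t.
Proof.
  intros HnC [[_ H]|[c [[_ [Hin _]] [Hct Hts]]]]; auto.
  exfalso. apply HnC. apply Hin; simpl; auto.
Qed.

Lemma tstar_unique t ts1 ts2 : is_tstar g t ts1 -> is_tstar g t ts2 -> ts1 = ts2.
Proof.
  intros [[HC1 E1]|[c1 [[_ [Hin1 [_ Hn1]]] [Hc1 Ht1]]]]
         [[HC2 E2]|[c2 [[_ [Hin2 [_ Hn2]]] [Hc2 Ht2]]]].
  - congruence.
  - exfalso. apply HC1. apply Hin2; simpl; auto.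
  - exfalso. apply HC2. apply Hin1; simpl; auto.
  - destruct (Rtotal_order ts1 ts2) as [H|[H|H]]; auto; exfalso.
    + apply (Hn1 ts1 eq_refl). apply Hin2; simpl; [|lra].
      apply (Rbar_lt_le_trans _ t); simpl; [exact Hc2|lra].
    + apply (Hn2 ts2 eq_refl). apply Hin1; simpl; [|lra].
      apply (Rbar_lt_le_trans _ t); simpl; [exact Hc1|lra].
Qed.

Definition DeltaG_quot (p s : R) : R := (DeltaG g s - DeltaG g p) / (g s - g p).

Lemma DeltaG_quot_lim_at_jump (E : R -> Prop) p : Dg g p -> (forall s, E s -> p < s) ->
  lim_at E (DeltaG_quot p) p (-1).
Proof.
  intros HD HE eps He. unfold Dg in HD.
  assert (Hgp : gplus g p = g p + DeltaG g p) by (unfold DeltaG; ring).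
  destruct (gplus_spec p) as [Hle [_ Happrox]].
  destruct (Happrox (eps * DeltaG g p / 2)) as [s0 [Hs0 Hgs0]]; [nra|].
  exists (s0 - p). split; [lra|]. intros s Es Hs.
  specialize (HE s Es). apply Rabs_def2 in Hs.
  assert (Hgs : gplus g p <= g s) by (apply Hle; lra).
  assert (Hjs : g s + DeltaG g s <= g s0) by (apply jump_le; lra).
  pose proof (DeltaG_ge0 s).
  assert (Heq : DeltaG_quot p s - -1 = (DeltaG g s + g s - gplus g p) / (g s - g p)).
  { unfold DeltaG_quot. rewrite Hgp. field. lra. }
  rewrite Heq, Rabs_right by (apply Rle_ge, Rdiv_le_0_compat; lra).
  apply (Rmult_lt_reg_r (g s - g p)); [lra|].
  unfold Rdiv. rewrite Rmult_assoc, Rinv_l, Rmult_1_r by lra.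
  nra.
Qed.

Lemma DeltaG_quot_lim_at0_of_jumps (E Z : R -> Prop) p : ~ Dg g p ->
  (forall s, E s -> Dg g s -> Z s) -> lim_at Z (DeltaG_quot p) p 0 -> lim_at E (DeltaG_quot p) p 0.
Proof.
  intros HnD HEZ H eps He. destruct (H eps He) as [d [Hd K]]. exists d. split; auto.
  intros s Es Hs. destruct (classic (Dg g s)) as [HDs|HnDs]; [apply K; auto|].
  unfold DeltaG_quot. rewrite (DeltaG_eq0 p HnD), (DeltaG_eq0 s HnDs).
  replace ((0 - 0) / (g s - g p) - 0) with 0 by (unfold Rdiv; ring).
  rewrite Rabs_R0. exact He.
Qed.

Lemma small_DeltaG_quot_between p x y m eps : ~ Dg g p -> x < y -> m > 0 -> eps > 0 ->
  (forall s, x < s < y -> m <= Rabs (g s - g p)) ->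
  exists s, x < s < y /\ Rabs (DeltaG_quot p s) < eps.
Proof.
  intros HnD Hxy Hm He Hsep.
  destruct (exists_small_jump x y (eps * m)) as [s [Hs Hjs]]; [auto|nra|].
  exists s. split; auto. specialize (Hsep s Hs). pose proof (DeltaG_ge0 s).
  unfold DeltaG_quot. rewrite (DeltaG_eq0 p HnD), Rminus_0_r.
  unfold Rdiv. rewrite Rabs_mult, Rabs_inv, (Rabs_right (DeltaG g s)) by lra.
  apply (Rmult_lt_reg_r (Rabs (g s - g p))); [lra|].
  rewrite Rmult_assoc, Rinv_l, Rmult_1_r by lra.
  nra.
Qed.

Variables a b : R.

Definition quot_domain (right_only left_only : Prop) (p : R) : R -> Prop :=
  fun s => a <= s <= b /\ g s <> g p /\ (right_only -> p < s) /\ (left_only -> s < p).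

Definition jump_domain (p : R) : R -> Prop :=
  fun s => a <= s <= b /\ Dg g s /\ s <> p /\ (Ngm g p -> s < p) /\ (Ngp g p -> p < s).

Definition Dset (p : R) : Prop := Dset1 g a b p \/ Dset2 g a b p \/ Dset3 g a b p.

(* On the side where [g] moves away from [g p], arbitrarily small jumps occur
   ([exists_small_jump]), and there the quotient is small. *)
Lemma DeltaG_quot_frequently_small ro lo p : ~ Dg g p ->
  approached_inside (quot_domain ro lo p) a b p ->
  forall eps del, eps > 0 -> del > 0 ->
    exists s, quot_domain ro lo p s /\ Rabs (s - p) < del /\ Rabs (DeltaG_quot p s) < eps.
Proof.
  intros HnD Happ eps del He Hdel.
  destruct (Happ del Hdel) as [s1 [[Hab1 [Hne1 [Hro1 Hlo1]]] [Hs1 Hin1]]].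
  apply Rabs_def2 in Hs1.
  destruct (Rtotal_order s1 p) as [Hlt|[<-|Hgt]]; [|contradiction|].
  - assert (Hg1 : g s1 < g p) by (destruct (Hg s1 p ltac:(lra)); [auto|contradiction]).
    set (x := Rmax a (p - del)).
    assert (a <= x) by apply Rmax_l. assert (p - del <= x) by apply Rmax_r.
    assert (x < s1) by (apply Rmax_lub_lt; lra).
    destruct (small_DeltaG_quot_between p x s1 (g p - g s1) eps) as [s [Hs Hsmall]];
      [auto|lra|lra|auto| |].
    { intros s Hs. pose proof (Hg s s1 ltac:(lra)). rewrite Rabs_left by lra. lra. }
    pose proof (Hg s s1 ltac:(lra)).
    exists s. split; [|split; [apply Rabs_def1; lra|exact Hsmall]].
    split; [lra|]. split; [lra|]. split; [intro Hr; specialize (Hro1 Hr); lra|intros; lra].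
  - assert (Hg1 : g p < g s1) by (destruct (Hg p s1 ltac:(lra)); [auto|congruence]).
    set (y := Rmin b (p + del)).
    assert (y <= b) by apply Rmin_l. assert (y <= p + del) by apply Rmin_r.
    assert (s1 < y) by (apply Rmin_glb_lt; lra).
    destruct (small_DeltaG_quot_between p s1 y (g s1 - g p) eps) as [s [Hs Hsmall]];
      [auto|lra|lra|auto| |].
    { intros s Hs. pose proof (Hg s1 s ltac:(lra)). rewrite Rabs_right by lra. lra. }
    pose proof (Hg s1 s ltac:(lra)).
    exists s. split; [|split; [apply Rabs_def1; lra|exact Hsmall]].
    split; [lra|]. split; [lra|]. split; [intros; lra|intro Hl'; specialize (Hlo1 Hl'); lra].
Qed.

Lemma DeltaG_quot_lim_eq0 ro lo p L : ~ Dg g p -> approached_inside (quot_domain ro lo p) a b p ->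
  lim_at (quot_domain ro lo p) (DeltaG_quot p) p L -> L = 0.
Proof.
  intros HnD Happ. apply lim_at_eq0_of_frequently_small.
  exact (DeltaG_quot_frequently_small ro lo p HnD Happ).
Qed.

Lemma approached_from_right ro lo p : a <= p < b -> ~ lo ->
  (forall s, p < s -> g p < g s) -> approached_inside (quot_domain ro lo p) a b p.
Proof.
  intros Hp Hlo Hinc del Hdel.
  set (s := p + Rmin del (b - p) / 2).
  assert (Rmin del (b - p) > 0) by (apply Rmin_pos; lra).
  assert (Rmin del (b - p) <= del) by apply Rmin_l.
  assert (Rmin del (b - p) <= b - p) by apply Rmin_r.
  assert (g p < g s) by (apply Hinc; unfold s; lra).
  exists s. split; [|split; [apply Rabs_def1|]; unfold s; lra].
  split; [unfold s; lra|]. split; [lra|]. split; [intros; unfold s; lra|contradiction].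
Qed.

Lemma approached_from_left ro lo p : a < p <= b -> ~ ro ->
  (forall s, s < p -> g s < g p) -> approached_inside (quot_domain ro lo p) a b p.
Proof.
  intros Hp Hro Hinc del Hdel.
  set (s := p - Rmin del (p - a) / 2).
  assert (Rmin del (p - a) > 0) by (apply Rmin_pos; lra).
  assert (Rmin del (p - a) <= del) by apply Rmin_l.
  assert (Rmin del (p - a) <= p - a) by apply Rmin_r.
  assert (g s < g p) by (apply Hinc; unfold s; lra).
  exists s. split; [|split; [apply Rabs_def1|]; unfold s; lra].
  split; [unfold s; lra|]. split; [lra|]. split; [contradiction|intros; unfold s; lra].
Qed.

Lemma has_gderiv_iff_right t p L : (Dg g t \/ Cg g t) -> is_tstar g t p ->
  (has_gderiv g a b (DeltaG g) t L <-> lim_at (quot_domain True False p) (DeltaG_quot p) p L).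
Proof.
  intros HDC Hts. unfold has_gderiv. split.
  - intros [[HnDC _]|[_ [ts [Hts' Hlim]]]]; [contradiction|].
    rewrite (tstar_unique t p ts Hts Hts'). apply filterlim_within_iff_lim_at in Hlim.
    revert Hlim. apply lim_at_ext; auto.
    intros s [Hs [Hne [Hright _]]]. exact (conj Hs (conj (Hright I) Hne)).
  - intros H. right. split; auto. exists p. split; auto.
    apply filterlim_within_iff_lim_at. revert H. apply lim_at_ext; auto.
    intros s [Hs [Hps Hne]]. split; [exact Hs|]. split; [exact Hne|]. split; [intros _; exact Hps|intros []].
Qed.

Lemma has_gderiv_iff_regular t L : ~ Dg g t -> ~ Cg g t ->
  (has_gderiv g a b (DeltaG g) t L <->
   lim_at (quot_domain (Ngp g t \/ t = a) (Ngm g t \/ t = b) t) (DeltaG_quot t) t L).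
Proof.
  intros HnD HnC. unfold has_gderiv. rewrite <- filterlim_within_iff_lim_at. split.
  - intros [[_ Hlim]|[[H|H] _]]; [exact Hlim|contradiction|contradiction].
  - intros H. left. split; [intros [|]; contradiction|exact H].
Qed.

Lemma lim_ratio_zero_iff t p : ~ Dg g p -> g t = g p ->
  (lim_ratio_zero g a b t p <-> lim_at (jump_domain p) (DeltaG_quot p) p 0).
Proof.
  intros HnD Htp. unfold lim_ratio_zero. rewrite Htp, filterlim_within_iff_lim_at.
  split; apply lim_at_ext; auto; intros s _; unfold DeltaG_quot; rewrite (DeltaG_eq0 p HnD);
    f_equal; ring.
Qed.

Lemma Dset_not_Dg p : Dset p -> ~ Dg g p.
Proof. intros [[_ [[_ H] _]]|[[_ [[_ H] _]]|[_ [_ [H _]]]]]; exact H. Qed.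

Definition corollary_at (t ts : R) : Prop :=
  (Dset ts -> (g_differentiable g a b (DeltaG g) t <-> lim_ratio_zero g a b t ts)) /\
  (~ Dset ts -> g_differentiable g a b (DeltaG g) t) /\
  (forall L, has_gderiv g a b (DeltaG g) t L -> (Dg g ts -> L = -1) /\ (~ Dg g ts -> L = 0)) /\
  ((forall t', Dset t' -> lim_ratio_zero g a b t' t') ->
     (Dg g ts -> has_gderiv g a b (DeltaG g) t (-1)) /\
     (~ Dg g ts -> has_gderiv g a b (DeltaG g) t 0)).

(* Off a jump, [DeltaG_quot p] vanishes outside [D_g], so a zero limit over the
   whole domain is the same as a zero limit over the jumps near [p]. *)
Lemma corollary_at_of_reduction t p ro lo : g t = g p ->
  (forall L, has_gderiv g a b (DeltaG g) t L <-> lim_at (quot_domain ro lo p) (DeltaG_quot p) p L) ->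
  approached_inside (quot_domain ro lo p) a b p ->
  (Dg g p -> ro) ->
  (~ Dg g p -> forall s, quot_domain ro lo p s /\ Dg g s <-> jump_domain p s) ->
  (~ Dg g p -> ~ Dset p -> isolated (jump_domain p) p) ->
  corollary_at t p.
Proof.
  intros Htp Hder Happ Hro Hjumps Hiso.
  assert (Hjump : Dg g p -> has_gderiv g a b (DeltaG g) t (-1)).
  { intros HD. apply Hder, DeltaG_quot_lim_at_jump; auto. intros s [_ [_ [Hs _]]]. auto. }
  assert (Hzero : ~ Dg g p ->
            lim_at (jump_domain p) (DeltaG_quot p) p 0 <-> has_gderiv g a b (DeltaG g) t 0).
  { intros HnD. rewrite Hder. split.
    - apply DeltaG_quot_lim_at0_of_jumps; auto. intros s Es HDs. apply Hjumps; auto.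
    - apply lim_at_ext; auto. intros s Zs. apply Hjumps; auto. }
  assert (Hval : forall L, has_gderiv g a b (DeltaG g) t L ->
                   (Dg g p -> L = -1) /\ (~ Dg g p -> L = 0)).
  { intros L HL. apply Hder in HL. split.
    - intros HD. apply Hder in Hjump; auto. eapply lim_at_unique; eauto.
    - intros HnD. eapply DeltaG_quot_lim_eq0; eauto. }
  split; [|split; [|split]].
  - intros HDs. pose proof (Dset_not_Dg p HDs) as HnD.
    rewrite (lim_ratio_zero_iff t p HnD Htp), Hzero by exact HnD. split.
    + intros [L HL]. rewrite <- (proj2 (Hval L HL) HnD). exact HL.
    + intros HL. exists 0. exact HL.
  - intros HnDs. destruct (classic (Dg g p)) as [HD|HnD].
    + exists (-1). auto.
    + exists 0. apply Hzero; auto. apply lim_at_isolated. auto.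
  - exact Hval.
  - intros Hall. split; [exact Hjump|]. intros HnD. apply Hzero; auto.
    destruct (classic (Dset p)) as [HDs|HnDs].
    + apply (lim_ratio_zero_iff p p HnD eq_refl). auto.
    + apply lim_at_isolated. auto.
Qed.

Hypothesis Hab : a < b.
Hypothesis Ha : ~ Ngm g a.
Hypothesis Hb : ~ (Dg g b \/ Cg g b \/ Ngp g b).

Lemma corollary_at_jump t ts : a <= t <= b -> Dg g t -> is_tstar g t ts -> corollary_at t ts.
Proof.
  intros Ht HD Hts.
  assert (HnC := Dg_not_Cg t HD).
  pose proof (tstar_not_Cg t ts HnC Hts) as ->.
  assert (Htb : t < b) by (destruct Ht as [_ [|<-]]; [auto|exfalso; apply Hb; auto]).
  apply (corollary_at_of_reduction t t True False); auto.
  - intros L. apply has_gderiv_iff_right; auto.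
  - apply approached_from_right; [lra|auto|]. intros s Hs.
    apply g_lt_right; auto. intros [_ HnD]. contradiction.
  - intros HnD. contradiction.
  - intros HnD. contradiction.
Qed.

Lemma corollary_at_plateau t ts : a <= t <= b -> ~ Dg g t -> Cg g t -> is_tstar g t ts ->
  corollary_at t ts.
Proof.
  intros Ht HnD HC [[HnC _]|[c [Hcomp [Hct Htts]]]]; [contradiction|].
  pose proof Hcomp as [_ [Hin [_ Hend]]].
  assert (HnCts : ~ Cg g ts) by (apply Hend; reflexivity).
  assert (Htsb : ts < b).
  { destruct (Rlt_le_dec ts b) as [|[Hbts|Hbts]]; auto; exfalso; apply Hb.
    - right; left. apply Hin; simpl; [|lra]. apply (Rbar_lt_le_trans _ t); simpl; [auto|lra].
    - rewrite Hbts. destruct (classic (Dg g ts)); [left; auto|right; right; split; eauto]. }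
  assert (Hgt : g t = g ts) by (apply (Cg_component_const_left c); auto; lra).
  assert (HnM : ~ Ngm g ts).
  { intros HM. apply (Ngm_Ngp_disjoint ts HM). split; [eauto|apply HM]. }
  apply (corollary_at_of_reduction t ts True False); auto.
  - intros L. apply has_gderiv_iff_right; [right; auto|right; exists c; auto].
  - apply approached_from_right; [lra|auto|]. intros s Hs. apply g_lt_right; auto.
  - intros HnDts s. assert (HP : Ngp g ts) by (split; eauto). split.
    + intros [[Hs [_ [Hright _]]] HDs]. specialize (Hright I).
      split; [auto|]. split; [auto|]. split; [lra|]. split; [contradiction|auto].
    + intros [Hs [HDs [_ [_ Hright]]]]. specialize (Hright HP). split; [|auto].
      split; [auto|]. split; [apply Rgt_not_eq, g_lt_right; auto|].
      split; [auto|intros []].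
  - intros HnDts HnDs. apply (not_acc_point_isolated (fun s => Dg g s /\ ts < s <= b)).
    + intro Hacc. apply HnDs. right; left. split; [lra|]. split; [split; eauto|auto].
    + assert (HP : Ngp g ts) by (split; eauto).
      intros s [Hs [HDs [Hne [_ Hright]]]]. specialize (Hright HP). repeat split; auto; lra.
Qed.

Lemma regular_approached t : a <= t <= b -> ~ Dg g t -> ~ Cg g t ->
  approached_inside (quot_domain (Ngp g t \/ t = a) (Ngm g t \/ t = b) t) a b t.
Proof.
  intros Ht HnD HnC.
  destruct (classic (Ngm g t \/ t = b)) as [Hlo|Hlo].
  - assert (Hro : ~ (Ngp g t \/ t = a)).
    { intros [HP| ->]; destruct Hlo as [HM| ->].
      - exact (Ngm_Ngp_disjoint t HM HP).
      - apply Hb. auto.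
      - exact (Ha HM).
      - lra. }
    apply approached_from_left; auto.
    + split; [|lra]. destruct (Req_dec t a) as [->|]; [exfalso; apply Hro; auto|lra].
    + intros s Hs. apply g_lt_left; auto.
  - apply approached_from_right; auto.
    + split; [lra|]. destruct (Req_dec t b) as [->|]; [exfalso; apply Hlo; auto|lra].
    + intros s Hs. apply g_lt_right; auto.
Qed.

Lemma regular_jumps t : ~ Dg g t -> ~ Cg g t -> forall s,
  quot_domain (Ngp g t \/ t = a) (Ngm g t \/ t = b) t s /\ Dg g s <-> jump_domain t s.
Proof.
  intros HnD HnC s. split.
  - intros [[Hs [Hne [Hright Hleft]]] HDs]. split; [auto|]. split; [auto|].
    split; [intros ->; auto|]. split; intros; [apply Hleft|apply Hright]; auto.
  - intros [Hs [HDs [Hne [Hleft Hright]]]]. split; [|auto].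
    destruct (Rtotal_order s t) as [Hst|[->|Hts]]; [|contradiction|].
    + assert (HnP : ~ Ngp g t) by (intro HP; specialize (Hright HP); lra).
      pose proof (g_lt_left t s HnC HnD HnP Hst).
      split; [auto|]. split; [lra|]. split; [intros [HP| ->]; [contradiction|lra]|auto].
    + assert (HnM : ~ Ngm g t) by (intro HM; specialize (Hleft HM); lra).
      pose proof (g_lt_right t s HnC HnM Hts).
      split; [auto|]. split; [lra|]. split; [auto|intros [HM| ->]; [contradiction|lra]].
Qed.

Lemma regular_isolated t : a <= t <= b -> ~ Dg g t -> ~ Dset t -> isolated (jump_domain t) t.
Proof.
  intros Ht HnD HnDs.
  destruct (classic (Ngm g t)) as [HM|HnM]; [|destruct (classic (Ngp g t)) as [HP|HnP]].
  - apply (not_acc_point_isolated (fun s => Dg g s /\ a <= s < t)).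
    + intro Hacc. apply HnDs. left. split; auto.
    + intros s [Hs [HDs [Hne [Hleft _]]]]. specialize (Hleft HM). repeat split; auto; lra.
  - apply (not_acc_point_isolated (fun s => Dg g s /\ t < s <= b)).
    + intro Hacc. apply HnDs. right; left. split; auto.
    + intros s [Hs [HDs [Hne [_ Hright]]]]. specialize (Hright HP). repeat split; auto; lra.
  - apply (not_acc_point_isolated (fun s => Dg g s /\ a <= s <= b)).
    + intro Hacc. apply HnDs. right; right. split; auto. split; [intros [|]; auto|auto].
    + intros s [Hs [HDs [Hne _]]]. auto.
Qed.

Lemma corollary_at_regular t ts : a <= t <= b -> ~ Dg g t -> ~ Cg g t -> is_tstar g t ts ->
  corollary_at t ts.
Proof.
  intros Ht HnD HnC Hts. pose proof (tstar_not_Cg t ts HnC Hts) as ->.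
  apply (corollary_at_of_reduction t t (Ngp g t \/ t = a) (Ngm g t \/ t = b)); auto.
  - intros L. apply has_gderiv_iff_regular; auto.
  - apply regular_approached; auto.
  - intros HD. contradiction.
  - intros _. apply regular_jumps; auto.
  - intros _. apply regular_isolated; auto.
Qed.

Lemma corollary_at_holds t ts : a <= t <= b -> is_tstar g t ts -> corollary_at t ts.
Proof.
  intros Ht Hts. destruct (classic (Dg g t)) as [HD|HnD].
  - apply corollary_at_jump; auto.
  - destruct (classic (Cg g t)) as [HC|HnC].
    + apply corollary_at_plateau; auto.
    + apply corollary_at_regular; auto.
Qed.

End DeltaG_gderivative.

Theorem corollary3p6 (g : R -> R) (a b : R) :
  nondecreasing g -> left_continuous g -> a < b ->
  ~ Ngm g a -> ~ (Dg g b \/ Cg g b \/ Ngp g b) ->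
  (forall t ts, a <= t <= b -> is_tstar g t ts ->
     ((Dset1 g a b ts \/ Dset2 g a b ts \/ Dset3 g a b ts) ->
        (g_differentiable g a b (DeltaG g) t <-> lim_ratio_zero g a b t ts)) /\
     (~ (Dset1 g a b ts \/ Dset2 g a b ts \/ Dset3 g a b ts) ->
        g_differentiable g a b (DeltaG g) t) /\
     (forall L, has_gderiv g a b (DeltaG g) t L ->
        (Dg g ts -> L = -1) /\ (~ Dg g ts -> L = 0))) /\
  ((forall t, (Dset1 g a b t \/ Dset2 g a b t \/ Dset3 g a b t) -> lim_ratio_zero g a b t t) ->
   forall t ts, a <= t <= b -> is_tstar g t ts ->
     (Dg g ts -> has_gderiv g a b (DeltaG g) t (-1)) /\
     (~ Dg g ts -> has_gderiv g a b (DeltaG g) t 0)).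
Proof.
  intros Hg Hl Hab Ha Hb. split.
  - intros t ts Ht Hts.
    destruct (corollary_at_holds g Hg Hl a b Hab Ha Hb t ts Ht Hts) as (Hiff & Hdiff & Hval & _).
    auto.
  - intros Hall t ts Ht Hts.
    destruct (corollary_at_holds g Hg Hl a b Hab Ha Hb t ts Ht Hts) as (_ & _ & _ & Hglobal).
    exact (Hglobal Hall).
Qed.
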